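(* Let $f:\mathbb{R}^{n_0}\to\mathbb{R}^{n_m}$ be an $m$-layer ReLU network with weights $\mathbf{W}^{(k)}$ and biases $\bm{b}^{(k)}$, let $\bm{x}_0\in\mathbb{R}^{n_0}$, $p\in[1,\infty]$, $\epsilon>0$, and let $\bm{l}^{(k)},\bm{u}^{(k)}$, $k\in[m-1]$, be valid pre-ReLU activation bounds on $B_p(\bm{x}_0,\epsilon)$ as described below. For each $j\in[n_m]$ define $$\gamma^L_j=\mu^-_j+\nu_j-\epsilon\|\mathbf{A}^{(0)}_{j,:}\|_q,\qquad \gamma^U_j=\mu^+_j+\nu_j+\epsilon\|\mathbf{A}^{(0)}_{j,:}\|_q,$$ where $1/p+1/q=1$, $\mu^+_j=-\sum_{k=1}^{m-1}\mathbf{A}^{(k)}_{j,:}\mathbf{T}^{(k)}_{:,j}$, $\mu^-_j=-\sum_{k=1}^{m-1}\mathbf{A}^{(k)}_{j,:}\mathbf{H}^{(k)}_{:,j}$ and $\nu_j=\mathbf{A}^{(0)}_{j,:}\bm{x}_0+\bm{b}^{(m)}_j+\sum_{k=1}^{m-1}\mathbf{A}^{(k)}_{j,:}\bm{b}^{(k)}$. Then for every $j\in[n_m]$, $\gamma^L_j\le f_j(\bm{x})\le\gamma^U_j$ for all $\bm{x}\in B_p(\bm{x}_0,\epsilon)$.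
   Context: Network: $\phi_0(\bm{x})=\bm{x}$; for $k\in[m-1]$, $\phi_k(\bm{x})=\sigma(\mathbf{W}^{(k)}\phi_{k-1}(\bm{x})+\bm{b}^{(k)})$, $\mathbf{W}^{(k)}\in\mathbb{R}^{n_k\times n_{k-1}}$, $\bm{b}^{(k)}\in\mathbb{R}^{n_k}$, $\sigma(\bm{y})=\max(\bm{y},\bm{0})$ elementwise; $f(\bm{x})=\mathbf{W}^{(m)}\phi_{m-1}(\bm{x})+\bm{b}^{(m)}$. $B_p(\bm{x}_0,\epsilon)=\{\bm{x}:\|\bm{x}-\bm{x}_0\|_p\le\epsilon\}$. Standing assumption: for each $k\in[m-1]$, $r\in[n_k]$, $\bm{l}^{(k)}_r\le\bm{u}^{(k)}_r$ and $\bm{l}^{(k)}_r\le\mathbf{W}^{(k)}_{r,:}\phi_{k-1}(\bm{x})+\bm{b}^{(k)}_r\le\bm{u}^{(k)}_r$ for all $\bm{x}\in B_p(\bm{x}_0,\epsilon)$. Index sets: $\mathcal{I}^+_k=\{r:\bm{u}^{(k)}_r\ge\bm{l}^{(k)}_r\ge0\}$, $\mathcal{I}^-_k=\{r:\bm{l}^{(k)}_r\le\bm{u}^{(k)}_r\le0\}$, $\mathcal{I}_k=\{r:\bm{l}^{(k)}_r<0<\bm{u}^{(k)}_r\}$. $\mathbf{D}^{(0)}=I_{n_0}$; for $k\in[m-1]$, $\mathbf{D}^{(k)}$ is diagonal $n_k\times n_k$ with $\mathbf{D}^{(k)}_{r,r}=\frac{\bm{u}^{(k)}_r}{\bm{u}^{(k)}_r-\bm{l}^{(k)}_r}$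 if $r\in\mathcal{I}_k$, $1$ if $r\in\mathcal{I}^+_k$, $0$ if $r\in\mathcal{I}^-_k$. $\mathbf{A}^{(m-1)}=\mathbf{W}^{(m)}\mathbf{D}^{(m-1)}$ and for $k=m-1,\dots,1$, $\mathbf{A}^{(k-1)}=\mathbf{A}^{(k)}\mathbf{W}^{(k)}\mathbf{D}^{(k-1)}$. For $k\in[m-1]$, $\mathbf{T}^{(k)},\mathbf{H}^{(k)}\in\mathbb{R}^{n_k\times n_m}$ with $\mathbf{T}^{(k)}_{r,j}=\bm{l}^{(k)}_r$ if $r\in\mathcal{I}_k$ and $\mathbf{A}^{(k)}_{j,r}>0$ (else $0$), and $\mathbf{H}^{(k)}_{r,j}=\bm{l}^{(k)}_r$ if $r\in\mathcal{I}_k$ and $\mathbf{A}^{(k)}_{j,r}<0$ (else $0$). *)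

From HB Require Import structures.
From mathcomp Require Import all_boot all_order all_algebra.
From mathcomp Require Import reals ereal exp.
Set Implicit Arguments. Unset Strict Implicit. Unset Printing Implicit Defensive.
Import Order.TTheory GRing.Theory Num.Theory.
Local Open Scope ring_scope.

Section Defs.
Variable R : realType.

Definition lpnorm (p : \bar R) (k : nat) (v : 'I_k -> R) : R :=
  match p with
  | +oo%E => \big[Num.max/0]_(i < k) `|v i|
  | (r%:E)%E => (\sum_(i < k) (`|v i| `^ r)) `^ (r^-1)
  | -oo%E => 0
  end.

(* Hoelder conjugate exponent q of p (1/p + 1/q = 1), for p in [1, +oo]. *)
Definition hconj (p : \bar R) : \bar R :=
  match p with
  | +oo%E => 1%:E
  | (r%:E)%E => if r == 1 then +oo%E else (r / (r - 1))%:E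
  | -oo%E => 1%:E
  end.

Definition relu (k : nat) (y : 'cV[R]_k) : 'cV[R]_k :=
  \col_i Num.max (y i 0) 0.

(* Network with dimensions n 0, ..., n M.+1 (i.e. m = M+1 layers).
   W k, b k are the paper's W^{(k+1)}, b^{(k+1)}. *)
Variables (n : nat -> nat)
  (W : forall k : nat, 'M[R]_(n k.+1, n k))
  (b : forall k : nat, 'cV[R]_(n k.+1)).

Fixpoint phi (k : nat) (x : 'cV[R]_(n 0)) : 'cV[R]_(n k) :=
  match k as k0 return 'cV[R]_(n k0) with
  | 0 => x
  | k'.+1 => relu (W k' *m phi k' x + b k')
  end.

Definition netf (M : nat) (x : 'cV[R]_(n 0)) : 'cV[R]_(n M.+1) :=
  W M *m phi M x + b M.

Definition ballp (p : \bar R) (x0 : 'cV[R]_(n 0)) (eps : R) (x : 'cV[R]_(n 0)) :=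
  lpnorm p (fun i => x i 0 - x0 i 0) <= eps.

Variables (l u : forall k : nat, 'cV[R]_(n k)).

Definition in_Iplus (k : nat) (r : 'I_(n k)) := 0 <= l k r 0.
Definition in_Iminus (k : nat) (r : 'I_(n k)) := u k r 0 <= 0.
Definition in_Iamb (k : nat) (r : 'I_(n k)) := (l k r 0 < 0) && (0 < u k r 0).

Definition Dmat (k : nat) : 'M[R]_(n k) :=
  match k as k0 return 'M[R]_(n k0) with
  | 0 => 1%:M
  | k'.+1 => diag_mx (\row_r
      (if in_Iamb r then u k'.+1 r 0 / (u k'.+1 r 0 - l k'.+1 r 0)
       else if in_Iplus r then 1 else 0))
  end.

Variable (m : nat) (A : forall k : nat, 'M[R]_(n m, n k)).

Definition Tmat (k : nat) : 'M[R]_(n k, n m) :=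
  \matrix_(r, j) (if in_Iamb r && (0 < A k j r) then l k r 0 else 0).
Definition Hmat (k : nat) : 'M[R]_(n k, n m) :=
  \matrix_(r, j) (if in_Iamb r && (A k j r < 0) then l k r 0 else 0).

End Defs.

(* Every ReLU whose pre-activation y is known to lie in [l, u] with l < 0 < u is
   squeezed between the line s y and the chord s (y - l), where s = u / (u - l);
   a neuron of stable sign is exactly linear.  After multiplication by a
   coefficient c, the sign of c decides which of the two lines bounds c relu(y)
   from above and which from below: this is where the intercepts T and H come
   from.  Substituting these affine bounds backwards, from the last hidden layer
   down to the input, squeezes f_j(x) between A^(0)_j x + biases + mu^-_j and
   A^(0)_j x + biases + mu^+_j, and Hoelder's inequality bounds A^(0)_j (x - x0)
   by eps |A^(0)_j|_q. *)

From HB Require Import structures.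
From mathcomp Require Import all_boot all_order all_algebra.
From mathcomp Require Import reals ereal exp.
From mathcomp Require Import ring lra zify.

Set Implicit Arguments. Unset Strict Implicit. Unset Printing Implicit Defensive.
Import Order.TTheory GRing.Theory Num.Theory.
Local Open Scope ring_scope.

Section LpNorm.
Variable R : realType.
Implicit Types (k : nat) (p q r : R).

Lemma powR_divr (x y r : R) : 0 <= x -> 0 <= y -> (x / y) `^ r = x `^ r / y `^ r.
Proof.
move=> x0 y0; rewrite powRM ?invr_ge0 //; congr (_ * _).
by rewrite -[y^-1]powR_inv1 // -powRrM mulN1r powRN.
Qed.

Lemma sum_powR_norm_eq0 k (a : 'I_k -> R) q i :
  \sum_j `|a j| `^ q = 0 -> a i = 0.
Proof.
move=> /psumr_eq0P sum0; apply/normr0_eq0/(@powR_eq0_eq0 _ _ q).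
exact: sum0 (fun j _ => powR_ge0 _ _) i isT.
Qed.

Lemma hoelder_sum_le k (a d : 'I_k -> R) p q (Na Nd : R) :
  0 < p -> 0 < q -> p^-1 + q^-1 = 1 -> 0 < Na -> 0 < Nd ->
  Na `^ q = \sum_i `|a i| `^ q -> Nd `^ p = \sum_i `|d i| `^ p ->
  \sum_i `|a i| * `|d i| <= Na * Nd.
Proof.
move=> p0 q0 pq Na0 Nd0 NaE NdE.
rewrite -[Na * Nd]mul1r -ler_pdivrMr ?mulr_gt0 // mulr_suml.
apply: le_trans (_ : \sum_i ((`|a i| / Na) `^ q / q + (`|d i| / Nd) `^ p / p) <= 1).
  apply: ler_sum => i _; rewrite invfM mulrACA.
  apply: conjugate_powR => //; last by rewrite addrC.
  - exact: divr_ge0 (ltW Na0).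
  - exact: divr_ge0 (ltW Nd0).
have powR_normalize (v : R) (N s : R) : 0 < N -> (`|v| / N) `^ s = `|v| `^ s / N `^ s.
  by move=> N0; exact: powR_divr (normr_ge0 v) (ltW N0).
under eq_bigr do rewrite !powR_normalize //.
rewrite big_split /= -!mulr_suml -NaE -NdE !mulfV ?gt_eqF ?powR_gt0 //.
by rewrite !mul1r addrC pq.
Qed.

Lemma lpnorm_ge0 (p : \bar R) k (v : 'I_k -> R) : 0 <= lpnorm p v.
Proof. by case: p => [r| |] /=; rewrite ?powR_ge0 ?bigmax_ge_id. Qed.

Lemma lpnorm1 k (v : 'I_k -> R) : lpnorm 1%:E v = \sum_i `|v i|.
Proof.
rewrite /= invr1 powRr1; last by apply: sumr_ge0 => i _; exact: powR_ge0.
by apply: eq_bigr => i _; rewrite powRr1.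
Qed.

Lemma normr_le_lpnormy k (v : 'I_k -> R) i : `|v i| <= lpnorm +oo%E v.
Proof. exact: le_bigmax. Qed.

Lemma powR_lpnorm r k (v : 'I_k -> R) : 0 < r ->
  lpnorm r%:E v `^ r = \sum_i `|v i| `^ r.
Proof.
move=> r0; rewrite /= -powRrM mulVf ?gt_eqF // powRr1 //.
by apply: sumr_ge0 => i _; exact: powR_ge0.
Qed.

Lemma lpnorm_eq0 r k (v : 'I_k -> R) i : 0 < r -> lpnorm r%:E v = 0 -> v i = 0.
Proof.
move=> r0 v0; apply: (sum_powR_norm_eq0 (q := r)).
by rewrite -powR_lpnorm // v0 powR0 ?gt_eqF.
Qed.

Lemma hoelder_lpnorm1y k (a d : 'I_k -> R) :
  \sum_i `|a i| * `|d i| <= lpnorm 1%:E a * lpnorm +oo%E d.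
Proof.
rewrite lpnorm1 mulr_suml; apply: ler_sum => i _.
by rewrite ler_wpM2l ?normr_le_lpnormy.
Qed.

Lemma hoelder_lpnorm r k (a d : 'I_k -> R) : 1 < r ->
  \sum_i `|a i| * `|d i| <= lpnorm (r / (r - 1))%:E a * lpnorm r%:E d.
Proof.
move=> r1; set q := r / (r - 1).
have r0 : 0 < r by lra.
have q0 : 0 < q by apply: divr_gt0; lra.
have [a0|Na0] := eqVneq (lpnorm q%:E a) 0.
  by rewrite a0 mul0r big1 // => i _; rewrite (lpnorm_eq0 i q0 a0) normr0 mul0r.
have [d0|Nd0] := eqVneq (lpnorm r%:E d) 0.
  by rewrite d0 mulr0 big1 // => i _; rewrite (lpnorm_eq0 i r0 d0) normr0 mulr0.
apply: (hoelder_sum_le (p := r) (q := q)); rewrite ?powR_lpnorm //.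
- by rewrite /q invf_div; field; rewrite gt_eqF.
- by rewrite lt0r Na0 lpnorm_ge0.
- by rewrite lt0r Nd0 lpnorm_ge0.
Qed.

Lemma hoelder_hconj (p : \bar R) k (a d : 'I_k -> R) : (1 <= p)%E ->
  `|\sum_i a i * d i| <= lpnorm (hconj p) a * lpnorm p d.
Proof.
move=> p1; apply: le_trans (ler_norm_sum _ _ _) _.
under eq_bigr do rewrite normrM.
case: p p1 => [r| |] //=; rewrite ?lee_fin => r1; last first.
  exact: hoelder_lpnorm1y.
have [->|r_neq1] := eqVneq r 1.
  by rewrite mulrC; under eq_bigr do rewrite mulrC; exact: hoelder_lpnorm1y.
by apply: hoelder_lpnorm; rewrite lt_neqAle eq_sym r_neq1.
Qed.

Lemma ballp_mulmx_bound (n : nat -> nat) m (G : 'M[R]_(m, n 0)) (j : 'I_m)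
    (p : \bar R) (x0 x : 'cV[R]_(n 0)) (eps : R) :
  (1 <= p)%E -> ballp p x0 eps x ->
  `|(G *m x) j 0 - (G *m x0) j 0| <= eps * lpnorm (hconj p) (fun i => G j i).
Proof.
move=> p1 hx; rewrite !mxE -sumrB; under eq_bigr do rewrite -mulrBr.
apply: le_trans (hoelder_hconj (fun i => G j i) (fun i => x i 0 - x0 i 0) p1) _.
by rewrite [eps * _]mulrC ler_wpM2l ?lpnorm_ge0.
Qed.
End LpNorm.

Section ReluRelaxation.
Variable R : realType.
Implicit Types lo up y c : R.

Definition relu_slope lo up : R :=
  if (lo < 0) && (0 < up) then up / (up - lo) else if 0 <= lo then 1 else 0.

Lemma relu_chord lo up y : lo < 0 < up -> lo <= y <= up ->
  up / (up - lo) * y <= Num.max y 0 <= up / (up - lo) * (y - lo).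
Proof.
move=> /andP[lo0 up0] /andP[loy yup].
set e := up / (up - lo).
have eE : e * (up - lo) = up by rewrite mulfVK // gt_eqF // subr_gt0 (lt_trans lo0).
have e0 : 0 < e by rewrite divr_gt0 // subr_gt0 (lt_trans lo0).
have e1 : e < 1 by nra.
by have [y0|y0] := lerP 0 y; apply/andP; split; nra.
Qed.

Lemma relu_slope_exact lo up y : ~~ ((lo < 0) && (0 < up)) -> lo <= y <= up ->
  Num.max y 0 = relu_slope lo up * y.
Proof.
move=> namb /andP[loy yup]; rewrite /relu_slope (negbTE namb).
have [lo0|lo0] := lerP 0 lo; first by rewrite mul1r max_l // (le_trans lo0).
have up0 : up <= 0 by rewrite leNgt; move: namb; rewrite lo0.
by rewrite mul0r max_r // (le_trans yup).
Qed.

(* As in T and H, the sign test is on s = c * slope; in the ambiguous case it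
   is the sign of c. *)
Lemma mul_relu_bounds c lo up y
    (s := c * relu_slope lo up) (amb := (lo < 0) && (0 < up)) :
  lo <= y <= up ->
  s * y - s * (if amb && (s < 0) then lo else 0) <= c * Num.max y 0
    <= s * y - s * (if amb && (0 < s) then lo else 0).
Proof.
move=> hy; have [ambP|namb] := boolP amb; last first.
  by rewrite /= mulr0 subr0 (relu_slope_exact namb hy) mulrA lexx.
have /andP[lo0 up0] := ambP.
have /andP[lower upper] := relu_chord ambP hy.
move: lower upper; rewrite /s /relu_slope -/amb ambP /=; set e := up / (up - lo) => lower upper.
have e0 : 0 < e by rewrite divr_gt0 // subr_gt0 (lt_trans lo0).
by rewrite pmulr_lgt0 // pmulr_llt0 //; case: (ltrgtP c 0) => c0; apply/andP; split; nra.
Qed.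
End ReluRelaxation.

Lemma nat_downward_ind (P : nat -> Prop) N :
  P N -> (forall k, (k < N)%N -> P k.+1 -> P k) -> P 0.
Proof.
move=> PN step; suff: forall d, (d <= N)%N -> P (N - d)%N by move/(_ N (leqnn N)); rewrite subnn.
elim=> [|d IHd] dN; first by rewrite subn0.
apply: step; first lia.
by rewrite subnSK //; apply: IHd; exact: ltnW.
Qed.

Section LayerRelaxation.
Variables (R : realType) (n : nat -> nat) (l u : forall k, 'cV[R]_(n k)).

Lemma mulmx_Dmat_entry m k (P : 'M[R]_(m, n k.+1)) i r :
  (P *m Dmat l u k.+1) i r = P i r * relu_slope (l k.+1 r 0) (u k.+1 r 0).
Proof. by rewrite mul_mx_diag !mxE. Qed.

Lemma relu_layer_bounds m k (A : forall k, 'M[R]_(n m, n k)) (P : 'M[R]_(n m, n k.+1))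
    (y : 'cV[R]_(n k.+1)) (j : 'I_(n m)) :
  P *m Dmat l u k.+1 = A k.+1 -> (forall r, l k.+1 r 0 <= y r 0 <= u k.+1 r 0) ->
  (A k.+1 *m y) j 0 - (A k.+1 *m Hmat l u A k.+1) j j <= (P *m relu y) j 0
    <= (A k.+1 *m y) j 0 - (A k.+1 *m Tmat l u A k.+1) j j.
Proof.
move=> PD hy; rewrite !mxE -!sumrB; apply/andP; split; apply: ler_sum => r _;
  rewrite !mxE -PD mulmx_Dmat_entry; by case/andP: (mul_relu_bounds (P j r) (hy r)).
Qed.
End LayerRelaxation.

Section Propagation.
Variables (R : realType) (M : nat) (n : nat -> nat)
  (W : forall k : nat, 'M[R]_(n k.+1, n k)) (b : forall k : nat, 'cV[R]_(n k.+1))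
  (x0 : 'cV[R]_(n 0)) (p : \bar R) (eps : R)
  (l u : forall k : nat, 'cV[R]_(n k)) (A : forall k : nat, 'M[R]_(n M.+1, n k)).
Hypothesis pre_bounds : forall k, (k < M)%N -> forall x, ballp p x0 eps x ->
  forall r, l k.+1 r 0 <= (W k *m phi W b k x + b k) r 0 <= u k.+1 r 0.
Hypothesis AM_def : A M = W M *m Dmat l u M.
Hypothesis A_def : forall k, (k < M)%N -> A k = A k.+1 *m W k *m Dmat l u k.
Variable j : 'I_(n M.+1).

Definition relax_offset (G : forall k, 'M[R]_(n k, n M.+1)) k :=
  \sum_(k <= i < M) ((A i.+1 *m b i) j 0 - (A i.+1 *m G i.+1) j j).

(* [P] stands for A^(k+1) W^(k+1), the coefficient of phi_k after the layers
   above k have been linearised; only P D^(k) = A^(k) is used downstream. *)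
Definition sandwiched k :=
  exists2 P : 'M[R]_(n M.+1, n k), P *m Dmat l u k = A k &
    forall x, ballp p x0 eps x ->
      (P *m phi W b k x) j 0 + b M j 0 + relax_offset (Hmat l u A) k
        <= netf W b M x j 0
        <= (P *m phi W b k x) j 0 + b M j 0 + relax_offset (Tmat l u A) k.

Lemma sandwiched_output : sandwiched M.
Proof.
exists (W M) => [|x _]; first by rewrite AM_def.
by rewrite /relax_offset !big_geq // !addr0 /netf !mxE lexx.
Qed.

Lemma sandwiched_pred k : (k < M)%N -> sandwiched k.+1 -> sandwiched k.
Proof.
move=> kM [P PD bounds]; exists (A k.+1 *m W k) => [|x hx]; first by rewrite -A_def.
have /andP[netL netU] := bounds x hx.
have /andP[reluL reluU] := relu_layer_bounds j PD (pre_bounds kM hx).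
have affineE : (A k.+1 *m (W k *m phi W b k x + b k)) j 0 =
    (A k.+1 *m W k *m phi W b k x) j 0 + (A k.+1 *m b k) j 0.
  by rewrite mulmxDr mulmxA mxE.
rewrite affineE in reluL reluU.
move: netL netU; rewrite /relax_offset !(big_ltn kM) /=.
by move=> netL netU; apply/andP; split; lra.
Qed.

Lemma sandwiched_input : sandwiched 0.
Proof. exact: nat_downward_ind sandwiched_output sandwiched_pred. Qed.
End Propagation.

Theorem corollary3p7 (R : realType) (M : nat) (n : nat -> nat)
  (W : forall k : nat, 'M[R]_(n k.+1, n k))
  (b : forall k : nat, 'cV[R]_(n k.+1))
  (x0 : 'cV[R]_(n 0)) (p : \bar R) (eps : R)
  (l u : forall k : nat, 'cV[R]_(n k))
  (A : forall k : nat, 'M[R]_(n M.+1, n k)) :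
  (1 <= p)%E -> 0 < eps ->
  (* valid pre-ReLU bounds for hidden layers k+1 = 1..M *)
  (forall k : nat, (k < M)%N -> forall r : 'I_(n k.+1),
     l k.+1 r 0 <= u k.+1 r 0 /\
     (forall x, ballp p x0 eps x ->
        l k.+1 r 0 <= (W k *m phi W b k x + b k) r 0 <= u k.+1 r 0)) ->
  (* A^{(m-1)} = W^{(m)} D^{(m-1)}, A^{(k-1)} = A^{(k)} W^{(k)} D^{(k-1)} *)
  A M = W M *m Dmat l u M ->
  (forall k : nat, (k < M)%N -> A k = A k.+1 *m W k *m Dmat l u k) ->
  forall j : 'I_(n M.+1),
    let q := hconj p in
    let muP := - \sum_(k < M) (A k.+1 *m Tmat l u A k.+1) j j in
    let muM := - \sum_(k < M) (A k.+1 *m Hmat l u A k.+1) j j in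
    let nu := (A 0 *m x0) j 0 + b M j 0 + \sum_(k < M) (A k.+1 *m b k) j 0 in
    let gL := muM + nu - eps * lpnorm q (fun i => A 0 j i) in
    let gU := muP + nu + eps * lpnorm q (fun i => A 0 j i) in
    forall x : 'cV[R]_(n 0), ballp p x0 eps x ->
      gL <= netf W b M x j 0 <= gU.
Proof.
move=> p1 _ bounds AM_def A_def j q muP muM nu gL gU x hx.
have pre_bounds k (kM : (k < M)%N) x' (hx' : ballp p x0 eps x') r :=
  (bounds k kM r).2 x' hx'.
have [P PD /(_ x hx)] := sandwiched_input pre_bounds AM_def A_def j.
rewrite /= mulmx1 in PD; rewrite PD => /andP[netL netU].
have /ler_normlP[devL devU] := ballp_mulmx_bound (A 0) j p1 hx.
move: netL netU; rewrite /= /relax_offset !big_mkord !sumrB => netL netU.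
by rewrite /gL /gU /muP /muM /nu /q; apply/andP; split; lra.
Qed.
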